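(* Let $G$ be a graph and $w$ a vertex of $G$ adjacent to two leaves $v_1$ and $v_2$. Then $$\phi(G)\le \sum_{u\in N(w)\setminus\{v_1\}}\phi\big(G-(N[w]\cup N[u])\big)+\phi(G-\{w,v_1,v_2\})+\phi(G-N[w]).$$
   Context: Graphs are finite and simple; a leaf is a vertex of degree $1$. $N(v)$ is the neighborhood of $v$, $N[v]=N(v)\cup\{v\}$, and $G-S$ is the subgraph induced by $V(G)\setminus S$. A subset $F$ of vertices is a dissociation set if $G[F]$ has maximum degree at most $1$; a maximal dissociation set is one not properly contained in another dissociation set; $\phi(G)$ is the number of maximal dissociation sets of $G$, with $\phi=1$ for the graph with no vertices. *)

From mathcomp Require Import all_boot all_order.
Set Implicit Arguments. Unset Strict Implicit. Unset Printing Implicit Defensive.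

Definition simple_graph (T : finType) (e : rel T) : Prop :=
  symmetric e /\ irreflexive e.

Section Graph.
Variables (T : finType) (e : rel T).

Definition nbhd (v : T) : {set T} := [set u | e v u].
Definition cnbhd (v : T) : {set T} := v |: nbhd v.

Definition is_leaf (v : T) : bool := #|nbhd v| == 1.

(* F is a dissociation set of the induced subgraph G[S]:
   F ⊆ S and G[F] has maximum degree at most 1. *)
Definition dissoc (S F : {set T}) : bool :=
  (F \subset S) && [forall x in F, #|F :&: nbhd x| <= 1].

Definition maxdissoc (S F : {set T}) : bool :=
  dissoc S F && [forall F' : {set T}, (F \proper F') ==> ~~ dissoc S F'].

(* phi of the induced subgraph G[S]; phi of the empty graph is 1 *)
Definition phi (S : {set T}) : nat := #|[set F : {set T} | maxdissoc S F]|.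

Definition phi_del (X : {set T}) : nat := phi (~: X).

End Graph.

From mathcomp Require Import all_boot all_order.
Set Implicit Arguments. Unset Strict Implicit. Unset Printing Implicit Defensive.

(* Proof of Lemma 2.4.  Split the maximal dissociation sets F of G by how they
   meet the star at w (v1, v2 are leaves hanging at w):
   - w notin F: maximality forces both leaves v1, v2 into F;
   - w, v1 in F;
   - w in F, v1 notin F: maximality (otherwise F + v1 would be a dissociation set)
     forces w to have a neighbour u <> v1 in F.
   Each class is bounded by a phi-term through the injection F |-> F :\: S,
   where S ({v1,v2}, {w,v1} or {w,u}) is a subset of F whose neighbourhood lies
   inside the deleted set X: then F :\: S is a maximal dissociation set of G - X
   (a strict enlargement of it plus S would strictly enlarge F).  When S is an
   edge {x,y} of G[F], the rest of F avoids N[x] :|: N[y], since a vertex of a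
   dissociation set has at most one neighbour in it. *)

Lemma card_bigcup_le (T I : finType) (A : {set I}) (G : I -> {set T}) :
  #|\bigcup_(i in A) G i| <= \sum_(i in A) #|G i|.
Proof.
apply: (big_ind2 (fun (X : {set T}) n => #|X| <= n)) => //; first by rewrite cards0.
by move=> X1 X2 n1 n2 le1 le2; apply: leq_trans (leq_card_setU _ _).1 (leq_add le1 le2).
Qed.

Section Dissociation.
Variables (T : finType) (e : rel T).
Hypotheses (esym : symmetric e) (eirr : irreflexive e).

Lemma dissoc_subset (S F F' : {set T}) : F' \subset F -> dissoc e S F -> dissoc e setT F'.
Proof.
move=> sF' /andP[_ /forallP dF]; rewrite /dissoc subsetT /=.
apply/forallP=> x; apply/implyP=> xF'.
apply: leq_trans (implyP (dF x) (subsetP sF' x xF')).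
by apply/subset_leq_card/setSI.
Qed.

Lemma dissoc_setU_sep (A B : {set T}) :
  dissoc e setT A -> dissoc e setT B -> (forall a b, a \in A -> b \in B -> ~~ e a b) ->
  dissoc e setT (A :|: B).
Proof.
move=> /andP[_ /forallP dA] /andP[_ /forallP dB] sep; rewrite /dissoc subsetT /=.
have nbhd_off (C D : {set T}) x :
    (forall y, y \in D -> ~~ e x y) -> (C :|: D) :&: nbhd e x = C :&: nbhd e x.
  move=> nD; apply/setP=> y; rewrite !inE.
  by case: (boolP (y \in D)) => [/nD/negbTE->|]; rewrite ?orbF ?andbF.
apply/forallP=> x; apply/implyP; rewrite inE => /orP[xA|xB].
- by rewrite nbhd_off; [exact: (implyP (dA x) xA) | move=> y /(sep x y xA)].
- rewrite setUC nbhd_off; first exact: (implyP (dB x) xB).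
  by move=> y yA; rewrite esym; exact: sep.
Qed.

Lemma dissoc_nbhd_uniq (F : {set T}) (x a b : T) :
  dissoc e setT F -> x \in F -> a \in F -> b \in F -> e x a -> e x b -> a = b.
Proof.
move=> /andP[_ /forallP dF] xF aF bF exa exb.
have /card_le1_eqP ab := implyP (dF x) xF.
by apply: ab; rewrite inE ?aF ?bF inE ?exa ?exb.
Qed.

Lemma dissoc_setU1 (F : {set T}) (x : T) :
  dissoc e setT F -> #|F :&: nbhd e x| <= 1 ->
  (forall y, y \in F :&: nbhd e x -> F :&: nbhd e y = set0) ->
  dissoc e setT (x |: F).
Proof.
move=> /andP[_ /forallP dF] le1 isolated; rewrite /dissoc subsetT /=.
have loopless z : [set z] :&: nbhd e z = set0.
  by apply/setP=> y; rewrite !inE; case: eqP => [->|]; rewrite ?eirr.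
apply/forallP=> z; apply/implyP; rewrite in_setU1 => /orP[/eqP->|zF].
  by rewrite setIUl loopless set0U.
rewrite setIUl; have [exz|nexz] := boolP (e z x).
  have /isolated-> : z \in F :&: nbhd e x by rewrite !inE zF esym.
  by rewrite setU0 (leq_trans (subset_leq_card (subsetIl _ _))) ?cards1.
have ->: [set x] :&: nbhd e z = set0.
  by apply/setP=> y; rewrite !inE; case: eqP => [->|]; rewrite ?(negbTE nexz).
by rewrite set0U (implyP (dF z) zF).
Qed.

Lemma maxdissoc_not_extendable (F : {set T}) (x : T) :
  maxdissoc e setT F -> x \notin F -> #|F :&: nbhd e x| <= 1 ->
  (forall y, y \in F :&: nbhd e x -> F :&: nbhd e y = set0) -> False.
Proof.
move=> /andP[dF /forallP maxF] xF le1 isolated.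
have /implyP/(_ (properUr _)) := maxF (x |: F).
by rewrite sub1set xF (dissoc_setU1 dF le1 isolated) => /(_ isT).
Qed.

Lemma maxdissoc_leaf (F : {set T}) (v w : T) :
  maxdissoc e setT F -> nbhd e v = [set w] -> v \notin F ->
  w \in F /\ F :&: nbhd e w != set0.
Proof.
move=> maxF Nv vF.
have le1 : #|F :&: nbhd e v| <= 1.
  by rewrite Nv (leq_trans (subset_leq_card (subsetIr _ _))) ?cards1.
have extend_by_v : (forall y, y \in F :&: [set w] -> F :&: nbhd e y = set0) -> False.
  by rewrite -Nv; exact: maxdissoc_not_extendable.
have wF : w \in F.
  apply/negPn/negP => wF; apply: extend_by_v => y; rewrite !inE => /andP[yF /eqP eyw].
  by rewrite -eyw yF in wF.
split=> //; apply/negP => /eqP isolated.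
by apply: extend_by_v => y; rewrite !inE => /andP[_ /eqP->].
Qed.

(* Deleting from a maximal F a part S whose neighbourhood lies in X, while the
   rest of F avoids X, yields a maximal dissociation set of G - X: any strict
   enlargement H of F :\: S inside G - X gives the strict enlargement H :|: S
   of F. *)
Lemma maxdissoc_delete (F S X : {set T}) :
  maxdissoc e setT F -> S \subset F -> S \subset X ->
  (forall s, s \in S -> nbhd e s \subset X) -> F :\: S \subset ~: X ->
  maxdissoc e (~: X) (F :\: S).
Proof.
move=> /andP[dF /forallP maxF] SF SX NSX FSX.
apply/andP; split.
  by rewrite /dissoc FSX; case/andP: (dissoc_subset (subsetDl F S) dF).
apply/forallP=> H; apply/implyP=> /properP[FSH [x xH xFS]]; apply/negP=> dH.
have HX : H \subset ~: X := (andP dH).1.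
have notX y : y \in H -> y \notin X by move=> /(subsetP HX); rewrite inE.
have dHS : dissoc e setT (H :|: S).
  apply: dissoc_setU_sep; [exact: dissoc_subset dH | exact: dissoc_subset dF |].
  move=> a b aH bS; apply: contra (notX a aH) => eab.
  by apply: (subsetP (NSX b bS)); rewrite inE esym.
have FHS : F \proper H :|: S.
  apply/properP; split.
    apply/subsetP=> y yF; rewrite inE; have [_|yS] := boolP (y \in S); first by rewrite orbT.
    by rewrite (subsetP FSH) // inE yS.
  exists x; first by rewrite inE xH.
  have xS : x \notin S by apply: contra (notX x xH); exact: (subsetP SX).
  by move: xFS; rewrite inE xS.
by have /implyP/(_ FHS) := maxF (H :|: S); rewrite dHS.
Qed.

Definition maxdissoc_with (P : pred {set T}) : {set {set T}} :=
  [set F | maxdissoc e setT F && P F].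

Lemma in_maxdissoc_with (P : pred {set T}) (F : {set T}) :
  (F \in maxdissoc_with P) = maxdissoc e setT F && P F.
Proof. by rewrite inE. Qed.

(* Counting version of maxdissoc_delete: if every maximal F satisfying P
   contains S and otherwise avoids X, then F |-> F :\: S injects these sets
   into the maximal dissociation sets of G - X. *)
Lemma card_maxdissoc_with_le (P : pred {set T}) (S X : {set T}) :
  S \subset X -> (forall s, s \in S -> nbhd e s \subset X) ->
  (forall F, maxdissoc e setT F -> P F -> S \subset F /\ F :\: S \subset ~: X) ->
  #|maxdissoc_with P| <= phi_del e X.
Proof.
move=> SX NSX split_F.
have delete_inj : {in maxdissoc_with P &, injective (fun F => F :\: S)}.
  move=> F F'; rewrite !in_maxdissoc_with => /andP[mF PF] /andP[mF' PF'] /setP eqFS.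
  have [SF _] := split_F F mF PF; have [SF' _] := split_F F' mF' PF'.
  apply/setP=> z; have [zS|zS] := boolP (z \in S).
    by rewrite (subsetP SF z zS) (subsetP SF' z zS).
  by move: (eqFS z); rewrite !inE zS.
rewrite -(card_in_imset delete_inj); apply: subset_leq_card.
apply/subsetP=> G /imsetP[F]; rewrite in_maxdissoc_with => /andP[mF PF] ->.
have [SF FSX] := split_F F mF PF.
by rewrite inE; apply: maxdissoc_delete.
Qed.

(* The case S = {x, y} for an edge xy: by dissoc_nbhd_uniq the rest of F
   avoids N[x] :|: N[y] automatically. *)
Lemma card_maxdissoc_edge_le (P : pred {set T}) (x y : T) :
  e x y -> (forall F, maxdissoc e setT F -> P F -> x \in F /\ y \in F) ->
  #|maxdissoc_with P| <= phi_del e (cnbhd e x :|: cnbhd e y).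
Proof.
move=> exy xy_in; apply: (card_maxdissoc_with_le (S := [set x; y])).
- by apply/subsetP=> z; rewrite !inE => /orP[]/eqP->; rewrite eqxx ?orbT.
- move=> s; rewrite !inE => /orP[]/eqP->; apply/subsetP=> z;
    by rewrite /nbhd !inE => ->; rewrite !orbT.
move=> F mF PF; have [xF yF] := xy_in F mF PF; have dF := (andP mF).1.
split; first by apply/subsetP=> z; rewrite !inE => /orP[]/eqP->.
apply/subsetP=> z; rewrite !inE negb_or => /andP[/andP[nzx nzy] zF].
apply/negP => /orP[/orP[/eqP zx|exz]|/orP[/eqP zy|eyz]].
- by rewrite zx eqxx in nzx.
- by rewrite (dissoc_nbhd_uniq dF xF zF yF exz exy) eqxx in nzy.
- by rewrite zy eqxx in nzy.
- have eyx : e y x by rewrite esym.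
  by rewrite (dissoc_nbhd_uniq dF yF zF xF eyz eyx) eqxx in nzx.
Qed.

Lemma leaf_nbhd (v w : T) : is_leaf e v -> e v w -> nbhd e v = [set w].
Proof.
move=> /cards1P[x Nv] evw.
have : w \in nbhd e v by rewrite inE.
by rewrite Nv inE => /eqP <-.
Qed.

Section PendantLeaves.
Variables (w v1 v2 : T).
Hypotheses (Nv1 : nbhd e v1 = [set w]) (Nv2 : nbhd e v2 = [set w]).

(* Every maximal F omits w, contains the edge w v1, or contains an edge w u
   with u <> v1 (otherwise v1 could be added to F). *)
Lemma maxdissoc_cases (F : {set T}) : maxdissoc e setT F ->
  [\/ w \notin F, (w \in F) && (v1 \in F)
    | exists2 u, u \in nbhd e w :\ v1 & (w \in F) && (u \in F)].
Proof.
move=> mF; have [wF|] := boolP (w \in F); last by constructor 1.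
have [v1F|v1F] := boolP (v1 \in F); first by constructor 2.
have [_ /set0Pn[u]] := maxdissoc_leaf mF Nv1 v1F.
rewrite !inE => /andP[uF ewu]; constructor 3; exists u; last by rewrite uF.
by rewrite !inE ewu andbT; apply: contraNneq v1F => <-.
Qed.

(* A maximal F omitting w contains both leaves (by maxdissoc_leaf), so these
   sets are counted by phi (G - {w, v1, v2}). *)
Lemma card_maxdissoc_without_le :
  #|maxdissoc_with (fun F => w \notin F)| <= phi_del e [set w; v1; v2].
Proof.
apply: (card_maxdissoc_with_le (S := [set v1; v2])).
- by apply/subsetP=> z; rewrite !inE => /orP[]/eqP->; rewrite eqxx ?orbT.
- move=> s; rewrite !inE => /orP[]/eqP->; rewrite ?Nv1 ?Nv2 sub1set !inE eqxx //.
move=> F mF wF.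
have leaf_in v : nbhd e v = [set w] -> v \in F.
  by move=> Nv; apply/negPn/negP => /(maxdissoc_leaf mF Nv)[wF' _]; rewrite wF' in wF.
split; first by apply/subsetP=> z; rewrite !inE => /orP[]/eqP->; apply: leaf_in.
apply/subsetP=> z; rewrite !inE negb_or => /andP[/andP[nz1 nz2] zF].
rewrite (negbTE nz1) (negbTE nz2) !orbF.
by apply: contraNneq wF => <-.
Qed.
End PendantLeaves.
End Dissociation.

Theorem lemma2p4 (T : finType) (e : rel T) (w v1 v2 : T) :
  simple_graph e ->
  v1 != v2 -> e w v1 -> e w v2 -> is_leaf e v1 -> is_leaf e v2 ->
  phi e [set: T] <=
    \sum_(u in nbhd e w :\ v1) phi_del e (cnbhd e w :|: cnbhd e u)
    + phi_del e [set w; v1; v2]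
    + phi_del e (cnbhd e w).
Proof.
move=> [esym eirr] _ ew1 ew2 leaf1 leaf2.
have Nv1 : nbhd e v1 = [set w] by apply: leaf_nbhd; rewrite // esym.
have Nv2 : nbhd e v2 = [set w] by apply: leaf_nbhd; rewrite // esym.
pose with_w u := maxdissoc_with e (fun F => (w \in F) && (u \in F)).
have cover : [set F | maxdissoc e setT F] \subset
    (\bigcup_(u in nbhd e w :\ v1) with_w u)
    :|: maxdissoc_with e (fun F => w \notin F) :|: with_w v1.
  apply/subsetP=> F; rewrite inE => mF; rewrite !inE mF /=.
  case: (maxdissoc_cases esym eirr Nv1 mF) => [-> | -> | [u Nu wuF]]; rewrite ?orbT //.
  by apply/orP; left; apply/orP; left; apply/bigcupP; exists u; rewrite // in_maxdissoc_with mF.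
have Nw1 : cnbhd e w :|: cnbhd e v1 = cnbhd e w.
  apply/setUidPl/subsetP=> z /setU1P[->|]; first by rewrite !inE ew1 orbT.
  by rewrite Nv1 => /set1P->; rewrite !inE eqxx.
apply: leq_trans (subset_leq_card cover) _.
apply: leq_trans (leq_card_setU _ _).1 _; apply: leq_add; last first.
  by rewrite -Nw1; apply: card_maxdissoc_edge_le => // F _ /andP[].
apply: leq_trans (leq_card_setU _ _).1 _; apply: leq_add; last first.
  exact: card_maxdissoc_without_le.
apply: leq_trans (card_bigcup_le _ _) _; apply: leq_sum => u; rewrite !inE => /andP[_ ewu].
by apply: card_maxdissoc_edge_le => // F _ /andP[].
Qed.
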